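(* Consider the discrete-time system $x(t+1) = A x(t) + B u(t)$ with $A \in \mathbb{R}^{d_x \times d_x}$, $B \in \mathbb{R}^{d_x \times d_u}$, control constraint $\mathcal U = \{u \in \mathbb{R}^{d_u} \mid \underline u \leq u \leq \overline u\}$ (with $\underline u \leq \overline u$) and state constraint $\mathcal X = \{x \in \mathbb{R}^{d_x} \mid \underline x \leq x \leq \overline x\}$. Let $T \geq 0$ be an integer. Let $G_{\mathcal I} \in \mathbb{R}^{d_x\times n_{\mathcal I}}$, $\alpha \in \mathbb{R}^{d_x}$, $\gamma\in\mathbb{R}^{n_{\mathcal I}}$ with $\gamma \geq 0$, $\Gamma = \mathrm{diag}(\gamma)$, $\mathcal I = \langle \alpha \mid G_{\mathcal I}\Gamma\rangle$, and let $\beta(t) \in \mathbb{R}^{d_u}$, $\Phi(t) \in \mathbb{R}^{d_u \times n_{\mathcal I}}$ for $t = 0,\ldots,T-1$. Suppose that for all $t = 0,\ldots,T$ \[ A^t\alpha + \sum_{s=0}^{t-1}A^{t-1-s}B\beta(s) - \Big|A^tG_{\mathcal I}\Gamma + \sum_{s=0}^{t-1}A^{t-1-s}B\Phi(s)\Big|\mathbf{1}_{n_{\mathcal I}} \geq \underline x, \] \[ A^t\alpha + \sum_{s=0}^{t-1}A^{t-1-s}B\beta(s) + \Big|A^tG_{\mathcal I}\Gamma + \sum_{s=0}^{t-1}A^{t-1-s}B\Phi(s)\Big|\mathbf{1}_{n_{\mathcal I}} \leq \overline x, \] and that for all $t = 0,\ldots,T-1$ \[ \beta(t) - |\Phi(t)|\mathbf{1}_{n_{\mathcal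 I}} \geq \underline u, \qquad \beta(t) + |\Phi(t)|\mathbf{1}_{n_{\mathcal I}} \leq \overline u. \] Then $\mathcal I \subseteq \mathrm{Viab}_{[0,T]}(\mathcal X)$, where $\mathrm{Viab}_{[0,T]}(\mathcal X)$ is the set of $x(0) \in \mathcal X$ for which there exists an input signal with $u(t) \in \mathcal U$ for $t = 0,\ldots,T$ such that the resulting trajectory satisfies $x(t)\in\mathcal X$ for all $t = 0,\ldots,T$.
   Context: Vector inequalities are elementwise; $|M|$ is the elementwise absolute value; $\mathbf{1}_n$ is the all-ones vector in $\mathbb{R}^n$. The notation $\langle c \mid G\rangle$ denotes the zonotope $\{c + G\lambda : \lambda \in [-1,1]^n\}$. $\mathrm{diag}(\gamma)$ is the diagonal matrix with $\gamma$ on its diagonal. *)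

From mathcomp Require Import all_boot all_order all_algebra.
Set Implicit Arguments. Unset Strict Implicit. Unset Printing Implicit Defensive.
Import Order.TTheory GRing.Theory Num.Theory.
Local Open Scope ring_scope.

Definition vle (R : realFieldType) (n : nat) (x y : 'cV[R]_n) : Prop :=
  forall i : 'I_n, x i 0 <= y i 0.

Definition mxabs (R : realFieldType) (m n : nat) (M : 'M[R]_(m, n)) : 'M[R]_(m, n) :=
  map_mx (fun x => `|x|) M.

Definition ones (R : realFieldType) (n : nat) : 'cV[R]_n := const_mx 1.

Definition diagv (R : realFieldType) (n : nat) (g : 'cV[R]_n) : 'M[R]_n :=
  diag_mx g^T.

Definition zonotope (R : realFieldType) (d n : nat) (c : 'cV[R]_d) (G : 'M[R]_(d, n))
  : 'cV[R]_d -> Prop :=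
  fun x => exists lam : 'cV[R]_n,
      (forall i : 'I_n, -1 <= lam i 0 <= 1) /\ x = c + G *m lam.

Definition box (R : realFieldType) (n : nat) (lo hi : 'cV[R]_n) : 'cV[R]_n -> Prop :=
  fun x => vle lo x /\ vle x hi.

Fixpoint traj (R : realFieldType) (dx du : nat) (A : 'M[R]_dx) (B : 'M[R]_(dx, du))
  (x0 : 'cV[R]_dx) (u : nat -> 'cV[R]_du) (t : nat) : 'cV[R]_dx :=
  match t with
  | 0 => x0
  | t'.+1 => A *m traj A B x0 u t' + B *m u t'
  end.

Definition viab (R : realFieldType) (dx du : nat) (A : 'M[R]_dx) (B : 'M[R]_(dx, du))
  (U : 'cV[R]_du -> Prop) (X : 'cV[R]_dx -> Prop) (T : nat) : 'cV[R]_dx -> Prop :=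
  fun x0 => X x0 /\ exists u : nat -> 'cV[R]_du,
      (forall t, (t <= T)%N -> U (u t)) /\
      (forall t, (t <= T)%N -> X (traj A B x0 u t)).

Arguments ones {R} n.

From mathcomp Require Import all_boot all_order all_algebra.
From mathcomp Require Import lra.

Set Implicit Arguments.
Unset Strict Implicit.
Unset Printing Implicit Defensive.
Import Order.TTheory GRing.Theory Num.Theory.
Local Open Scope ring_scope.

(* Feeding the affine feedback u(t) = beta(t) + Phi(t) lam to the initial state
   alpha + G Gamma lam makes x(t) = c(t) + M(t) lam, where c(t) and M(t) are the
   centre and generator matrix in the hypotheses.  Since lam ranges over the unit
   cube, every entry of M(t) lam is bounded by the row sum of |M(t)|, so the
   hypotheses put x(t) in the state box and u(t) in the input box. *)

Section Trajectories.
Variables (R : realFieldType) (dx du : nat) (A : 'M[R]_dx) (B : 'M[R]_(dx, du)).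

Definition forced_response k (t : nat) (f : nat -> 'M[R]_(du, k)) : 'M[R]_(dx, k) :=
  \sum_(s < t) (A ^+ (t - 1 - s)%N *m B *m f s).

Lemma forced_responseS k t (f : nat -> 'M[R]_(du, k)) :
  forced_response t.+1 f = A *m forced_response t f + B *m f t.
Proof.
rewrite /forced_response big_ord_recr /= subn1 /= subnn expr0 mul1mx mulmx_sumr.
congr (_ + _); apply: eq_bigr => s _.
by rewrite -subnDA add1n -(subnSK (ltn_ord s)) exprS !mulmxA.
Qed.

Lemma traj_closed_form x0 u t :
  traj A B x0 u t = A ^+ t *m x0 + forced_response t u.
Proof.
elim: t => [|t IH] /=; first by rewrite /forced_response big_ord0 expr0 mul1mx addr0.
by rewrite IH forced_responseS mulmxDr exprS mulmxA addrA.
Qed.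

Lemma eq_traj x0 u v t : (forall s, (s < t)%N -> u s = v s) ->
  traj A B x0 u t = traj A B x0 v t.
Proof.
elim: t => [|t IH] //= euv.
by rewrite euv // IH // => s /ltnW; apply: euv.
Qed.

Lemma traj_affine_feedback k (G : 'M[R]_(dx, k)) (alpha : 'cV[R]_dx)
    (beta : nat -> 'cV[R]_du) (Phi : nat -> 'M[R]_(du, k)) (lam : 'cV[R]_k) t :
  traj A B (alpha + G *m lam) (fun s => beta s + Phi s *m lam) t =
  (A ^+ t *m alpha + forced_response t beta)
    + (A ^+ t *m G + forced_response t Phi) *m lam.
Proof.
rewrite traj_closed_form.
have -> : forced_response t (fun s => beta s + Phi s *m lam)
          = forced_response t beta + forced_response t Phi *m lam.
  rewrite /forced_response mulmx_suml -big_split /=; apply: eq_bigr => s _.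
  by rewrite mulmxDr mulmxA.
by rewrite mulmxDr mulmxDl !mulmxA addrACA.
Qed.

End Trajectories.

Lemma norm_mulmx_cube_le (R : realFieldType) m k (M : 'M[R]_(m, k))
    (lam : 'cV[R]_k) (i : 'I_m) :
  (forall j : 'I_k, -1 <= lam j 0 <= 1) ->
  `|(M *m lam) i 0| <= (mxabs M *m ones k) i 0.
Proof.
move=> lam_cube; rewrite !mxE.
apply: (le_trans (ler_norm_sum _ _ _)); apply: ler_sum => j _.
rewrite !mxE mulr1 normrM ler_piMr // ler_norml.
exact: lam_cube.
Qed.

Lemma zonotope_sub_box (R : realFieldType) m k (c lo hi : 'cV[R]_m)
    (M : 'M[R]_(m, k)) (x : 'cV[R]_m) :
  vle lo (c - mxabs M *m ones k) -> vle (c + mxabs M *m ones k) hi ->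
  zonotope c M x -> box lo hi x.
Proof.
move=> lo_le hi_ge [lam [lam_cube ->]].
split=> i; move: (lo_le i) (hi_ge i) (norm_mulmx_cube_le M i lam_cube);
  rewrite !mxE ler_norml => ? ? /andP[? ?]; lra.
Qed.

Theorem proposition5p2 (R : realFieldType) (dx du nI : nat)
  (A : 'M[R]_dx) (B : 'M[R]_(dx, du))
  (ulo uhi : 'cV[R]_du) (xlo xhi : 'cV[R]_dx) (T : nat)
  (GI : 'M[R]_(dx, nI)) (alpha : 'cV[R]_dx) (gamma : 'cV[R]_nI)
  (beta : nat -> 'cV[R]_du) (Phi : nat -> 'M[R]_(du, nI)) :
  vle ulo uhi ->
  (forall i : 'I_nI, 0 <= gamma i 0) ->
  (forall t : nat, (t <= T)%N ->
     let c := A ^+ t *m alpha + \sum_(s < t) (A ^+ (t - 1 - s)%N *m B *m beta s) in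
     let M := A ^+ t *m GI *m diagv gamma
              + \sum_(s < t) (A ^+ (t - 1 - s)%N *m B *m Phi s) in
     vle xlo (c - mxabs M *m ones nI) /\ vle (c + mxabs M *m ones nI) xhi) ->
  (forall t : nat, (t < T)%N ->
     vle ulo (beta t - mxabs (Phi t) *m ones nI) /\
     vle (beta t + mxabs (Phi t) *m ones nI) uhi) ->
  forall x : 'cV[R]_dx,
    zonotope alpha (GI *m diagv gamma) x ->
    viab A B (box ulo uhi) (box xlo xhi) T x.
Proof.
(* The sign of gamma is irrelevant: the cube of lam is symmetric. *)
move=> ulo_le_uhi _ state_bounds input_bounds x [lam [lam_cube ->]].
pose feedback s := beta s + Phi s *m lam.
have state_in_box t : (t <= T)%N ->
    box xlo xhi (traj A B (alpha + GI *m diagv gamma *m lam) feedback t).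
  move=> le_tT; have [lo_le hi_ge] := state_bounds t le_tT.
  apply: (zonotope_sub_box lo_le hi_ge); rewrite traj_affine_feedback.
  by exists lam; rewrite mulmxA.
split; first exact: (state_in_box 0%N).
(* u(T) never affects x(0..T) but must still lie in U; take ulo. *)
exists (fun t => if (t < T)%N then feedback t else ulo); split=> t le_tT.
  case: ifP => [lt_tT | _]; last by split=> // i; exact: lexx.
  have [lo_le hi_ge] := input_bounds t lt_tT.
  by apply: (zonotope_sub_box lo_le hi_ge); exists lam.
rewrite (@eq_traj _ _ _ A B _ _ feedback); first exact: state_in_box.
by move=> s lt_st; rewrite (leq_trans lt_st le_tT).
Qed.
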